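(* Let $\rho=(r,U)$ be a universally quantified rule and let $(\pi_i\colon L\to L_i,\gamma_i\colon L_i\rightharpoonup R_i)$, $i\in\{1,2\}$, be instantiations of $\rho$ with $(\pi_2,\gamma_2)=(\pi_1,\gamma_1)\oplus u$ for some $u\in U$. Let $\mu_L\colon L_2\rightharpoonup L_1$, $\mu_R\colon R_2\rightharpoonup R_1$ and $\mu_R'\colon R_1\rightharpoonup R'$ be subgraph morphisms with $\gamma_1\circ\mu_L=\mu_R\circ\gamma_2$, and let $m\colon R'\to G$ be a total injective morphism. Then for every pushout complement $H_2$ of $\mu_R'\circ\mu_R\circ\gamma_2$ and $m$ whose morphism $m_2'\colon L_2\to H_2$ is total and injective, there is a pushout complement $H_1$ of $\mu_R'\circ\gamma_1$ and $m$ with $H_1\sqsubseteq H_2$.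
   Context: Fix a finite label set $\Lambda$ with arity function $\mathrm{ar}\colon\Lambda\to\mathbb N$. A (hyper)graph $G=(V_G,E_G,c_G,l_G)$ consists of finite sets $V_G$ (nodes) and $E_G$ (edges), a connection function $c_G\colon E_G\to V_G^*$ and a labelling $l_G\colon E_G\to\Lambda$ with $|c_G(e)|=\mathrm{ar}(l_G(e))$; an edge $e$ is incident to a node $v$ if $v$ occurs in $c_G(e)$. A morphism $\phi\colon G\rightharpoonup G'$ is a pair of partial functions $\phi_V,\phi_E$ such that whenever $\phi_E(e)$ is defined, $\phi_V$ is defined on all nodes incident to $e$, $l_{G'}(\phi_E(e))=l_G(e)$ and $\phi_V(c_G(e))=c_{G'}(\phi_E(e))$. ''Total'' means defined everywhere. Pushouts are taken in the category of graphs and partial morphisms (always exist, unique up to isomorphism; concretely: quotient of $G_1\sqcup G_2$ by the smallest equivalence identifying $\phi(x)$ and $\psi(x)$ for $x\in G_0$, dropping classes containing the image of an $x\in G_0$ on which $\phi$ or $\psi$ is undefined and edge classes incident to dropped node classes). Given $a\colon A\rightharpoonup B$ and $b\colon B\rightharpoonup D$, a pushout complement of $a$ and $b$ is a graph $C$ with morphisms $c\colon A\rightharpoonup C$, $d\colon C\rightharpoonup D$ such that $D$ with $b,d$ is a pushout of $a,c$. A subgraph morphism is an injective and surjective morphism; $G_1\sqsubseteq G_2$ ($G_1$ is a subgraph of $G_2$) if there is a subgraph morphism $G_2\rightharpoonup G_1$. A universally quantified rule is $\rho=(r,U)$ with $r\colon L\rightharpoonup R$ and $U$ a finite set of pairs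 $u=(p_u,q_u)$, $p_u\colon L\to L_u$ total injective, $q_u\colon L_u\rightharpoonup R_u$, such that for every $x\in L$, $q_u(p_u(x))$ is defined and has exactly one preimage under $q_u$; $Q(u)$ is the set of $v\in V_L$ such that some edge incident to $p_u(v)$ has no preimage under $p_u$, required nonempty. Instantiations $(\pi\colon L\to\overline L$ total injective, $\gamma\colon\overline L\rightharpoonup\overline R)$ are defined recursively: $(\mathrm{id}_L,r)$ is one (length 0); if $(\pi,\gamma)$ is one of length $n$ and $u\in U$, let $\overline L_u$ with $p_u'\colon\overline L\to\overline L_u$, $\pi'\colon L_u\to\overline L_u$ be the pushout of $\pi,p_u$, let $\overline R_u$ with $\alpha\colon\overline R\rightharpoonup\overline R_u$, $\beta\colon R_u\rightharpoonup\overline R_u$ be the pushout of $\gamma\circ\pi$ and $q_u\circ p_u$, and $\eta\colon\overline L_u\rightharpoonup\overline R_u$ the unique morphism with $\eta\circ p_u'=\alpha\circ\gamma$, $\eta\circ\pi'=\beta\circ q_u$; then $(\pi,\gamma)\oplus u:=(p_u'\circ\pi,\eta)$ is an instantiation of length $n+1$. *)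

From mathcomp Require Import all_boot.
From Stdlib Require List.
Set Implicit Arguments. Unset Strict Implicit. Unset Printing Implicit Defensive.

Section Graphs.
Variable Lam : finType.
Variable ar : Lam -> nat.

Record graph := Graph {
  gV : finType;
  gE : finType;
  gc : gE -> seq gV;
  gl : gE -> Lam;
  gar : forall e, size (gc e) = ar (gl e) }.

(* Partial morphism: if phi_E(e) is defined, phi_V is defined on all nodes
   incident to e, labels agree and phi_V(c(e)) = c'(phi_E(e)). *)
Definition morph_axiom (G H : graph) (fV : gV G -> option (gV H))
  (fE : gE G -> option (gE H)) :=
  forall e e', fE e = Some e' ->
    @gl H e' = @gl G e /\ map fV (@gc G e) = map Some (@gc H e').

Record morph (G H : graph) := Morph {
  mV : gV G -> option (gV H);
  mE : gE G -> option (gE H);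
  mP : morph_axiom mV mE }.

Lemma idm_axiom (G : graph) : morph_axiom (fun v : gV G => Some v) (fun e => Some e).
Proof. by move=> e e' [<-]. Qed.

Definition idm (G : graph) : morph G G := Morph (@idm_axiom G).

Lemma comp_axiom (G H K : graph) (g : morph H K) (f : morph G H) :
  morph_axiom (fun v => obind (mV g) (mV f v)) (fun e => obind (mE g) (mE f e)).
Proof.
move=> e e''; case Hf: (mE f e) => [e'|] //= Hg.
have [l1 m1] := mP Hf; have [l2 m2] := mP Hg.
split; first by rewrite l2 l1.
have -> : map (fun v => obind (mV g) (mV f v)) (@gc G e)
         = map (obind (mV g)) (map (mV f) (@gc G e)) by rewrite -map_comp.
by rewrite m1 -map_comp m2.
Qed.

Definition mcomp (G H K : graph) (g : morph H K) (f : morph G H) : morph G K :=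
  Morph (@comp_axiom G H K g f).

Definition meq (G H : graph) (f g : morph G H) :=
  (forall v, mV f v = mV g v) /\ (forall e, mE f e = mE g e).

Definition total (G H : graph) (f : morph G H) :=
  (forall v, mV f v <> None) /\ (forall e, mE f e <> None).

Definition injective_m (G H : graph) (f : morph G H) :=
  (forall v v' w, mV f v = Some w -> mV f v' = Some w -> v = v') /\
  (forall e e' w, mE f e = Some w -> mE f e' = Some w -> e = e').

Definition surjective_m (G H : graph) (f : morph G H) :=
  (forall w, exists v, mV f v = Some w) /\ (forall w, exists e, mE f e = Some w).

Definition total_inj (G H : graph) (f : morph G H) := total f /\ injective_m f.

Definition subgraph_morph (G H : graph) (f : morph G H) :=
  injective_m f /\ surjective_m f.

Definition subgraph (G1 G2 : graph) := exists f : morph G2 G1, subgraph_morph f.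

Definition is_pushout (A B C D : graph) (a : morph A B) (c : morph A C)
  (b : morph B D) (d : morph C D) :=
  meq (mcomp b a) (mcomp d c) /\
  forall (X : graph) (b' : morph B X) (d' : morph C X),
    meq (mcomp b' a) (mcomp d' c) ->
    exists u : morph D X,
      meq (mcomp u b) b' /\ meq (mcomp u d) d' /\
      forall u' : morph D X, meq (mcomp u' b) b' -> meq (mcomp u' d) d' -> meq u' u.

Definition is_po_complement (A B D C : graph) (a : morph A B) (b : morph B D)
  (c : morph A C) (d : morph C D) := is_pushout a c b d.

Record quant (L : graph) := Quant {
  qLu : graph; qRu : graph; qp : morph L qLu; qq : morph qLu qRu }.

Record rule := Rule {
  rL : graph; rR : graph; rr : morph rL rR; rU : seq (quant rL) }.

Definition Qset (L : graph) (u : quant L) (v : gV L) : Prop :=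
  exists w e, mV (qp u) v = Some w /\ w \in @gc (qLu u) e /\
              forall e0, mE (qp u) e0 <> Some e.

Definition wf_quant (L : graph) (u : quant L) : Prop :=
  total_inj (qp u) /\
  (forall v w, mV (qp u) v = Some w ->
     exists y, mV (qq u) w = Some y /\ forall z, mV (qq u) z = Some y -> z = w) /\
  (forall e w, mE (qp u) e = Some w ->
     exists y, mE (qq u) w = Some y /\ forall z, mE (qq u) z = Some y -> z = w) /\
  (exists v, Qset u v).

Definition wf_rule (rho : rule) : Prop := forall u, List.In u (rU rho) -> wf_quant u.

Definition oplus (L Lb Rb L2 R2 : graph) (pi : morph L Lb) (gam : morph Lb Rb)
  (u : quant L) (pi2 : morph L L2) (gam2 : morph L2 R2) : Prop :=
  exists (p' : morph Lb L2) (pi' : morph (qLu u) L2)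
         (alpha : morph Rb R2) (beta : morph (qRu u) R2),
    is_pushout pi (qp u) p' pi' /\
    is_pushout (mcomp gam pi) (mcomp (qq u) (qp u)) alpha beta /\
    meq (mcomp gam2 p') (mcomp alpha gam) /\
    meq (mcomp gam2 pi') (mcomp beta (qq u)) /\
    meq pi2 (mcomp p' pi).

Inductive instantiation (rho : rule) :
  forall (Lb Rb : graph), morph (rL rho) Lb -> morph Lb Rb -> Prop :=
| inst_base : instantiation (idm (rL rho)) (rr rho)
| inst_step : forall (Lb Rb L2 R2 : graph) (pi : morph (rL rho) Lb)
    (gam : morph Lb Rb) (u : quant (rL rho)) (pi2 : morph (rL rho) L2)
    (gam2 : morph L2 R2),
    instantiation pi gam -> List.In u (rU rho) -> oplus pi gam u pi2 gam2 ->
    instantiation pi2 gam2.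

End Graphs.

From mathcomp Require Import all_boot.
From Stdlib Require List.
Set Implicit Arguments. Unset Strict Implicit. Unset Printing Implicit Defensive.

(* H1 is obtained from H2 by deleting the images under m2' of the items of L2
   that mu_L does not keep, together with the edges left dangling.  Since m2'
   is injective these items are images of nothing else, and the pushout sends
   them to nothing in G; hence G is still the pushout of R' and H1 over L1, with
   the universal property inherited from the one over L2. *)

Lemma map_pmap_Some (aT rT : Type) (f : aT -> option rT) (s : seq aT) :
  all (isSome \o f) s -> map f s = map Some (pmap f s).
Proof. by elim: s => //= x s IH /andP []; case: (f x) => //= y _ /IH ->. Qed.

Lemma map_eq_Some_isSome (aT : eqType) (rT : Type) (f : aT -> option rT) s t :
  map f s = map Some t -> {in s, forall x, isSome (f x)}.
Proof.
elim: s t => [|x s IH] [|y t] //= [fx fs] z; rewrite in_cons => /orP [/eqP ->|].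
  by rewrite fx.
exact: IH fs z.
Qed.

Lemma map_eq_Some_mem (aT rT : eqType) (f : aT -> option rT) s t y :
  map f s = map Some t -> y \in t -> exists2 x, x \in s & f x = Some y.
Proof.
elim: s t => [|x s IH] [|z t] //= [fx fs]; rewrite in_cons => /orP [/eqP ->|yt].
  by exists x; rewrite ?mem_head.
by have [x' x's fx'] := IH _ fs yt; exists x'; rewrite // in_cons x's orbT.
Qed.

Lemma map_eq_Some_inv (aT rT : Type) (f : aT -> option rT) (g : rT -> option aT)
    s t :
  (forall x y, f x = Some y -> g y = Some x) ->
  map f s = map Some t -> map g t = map Some s.
Proof.
move=> fg; elim: s t => [|x s IH] [|y t] //= [fx fs].
by rewrite (fg _ _ fx) (IH _ fs).
Qed.

Section Restriction.

Variables (Lam : finType) (ar : Lam -> nat) (H : graph ar).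
Variables (keepV : pred (gV H)) (keepE : pred (gE H)).

Definition restr_keepE : pred (gE H) := fun e => keepE e && all keepV (gc e).

Definition restrV : finType := {v : gV H | keepV v}.
Definition restrE : finType := {e : gE H | restr_keepE e}.
Definition restr_gc (e : restrE) : seq restrV := pmap insub (gc (val e)).
Definition restr_gl (e : restrE) : Lam := gl (val e).

Lemma restr_keepE_all (e : gE H) : restr_keepE e -> all keepV (gc e).
Proof. by case/andP. Qed.

Lemma map_val_restr_gc (e : restrE) : map val (restr_gc e) = gc (val e).
Proof.
rewrite (pmap_filter (@insubK _ _ _)) (eq_filter (@isSome_insub _ _ _)).
exact/all_filterP/restr_keepE_all/valP.
Qed.

Lemma restr_gar (e : restrE) : size (restr_gc e) = ar (restr_gl e).
Proof. by rewrite -(size_map val) map_val_restr_gc gar. Qed.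

Definition restr_graph : graph ar := Graph restr_gar.

Lemma restr_proj_axiom :
  morph_axiom (G := H) (H := restr_graph) insub insub.
Proof.
move=> e e'; case: insubP => // e0 _ <- [<-]; split => //.
apply: map_pmap_Some; apply: sub_all (restr_keepE_all (valP e0)) => v /=.
by rewrite isSome_insub.
Qed.

Definition restr_proj : morph H restr_graph := Morph restr_proj_axiom.

Lemma restr_incl_axiom :
  morph_axiom (G := restr_graph) (H := H) (Some \o val) (Some \o val).
Proof. by move=> e e' [<-]; rewrite map_comp map_val_restr_gc. Qed.

Definition restr_incl : morph restr_graph H := Morph restr_incl_axiom.

Lemma restr_subgraph : subgraph restr_graph H.
Proof.
exists restr_proj; do 2 split.
- by move=> v v' w /=; do 2 case: insubP => // ? _ <- [->].
- by move=> e e' w /=; do 2 case: insubP => // ? _ <- [->].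
- by move=> w; exists (val w); rewrite /= valK.
- by move=> w; exists (val w); rewrite /= valK.
Qed.

End Restriction.

Section SubgraphInverse.

Variables (Lam : finType) (ar : Lam -> nat) (L2 L1 : graph ar).
Variables (mu : morph L2 L1) (Hmu : subgraph_morph mu).

Definition sinvV (y : gV L1) : option (gV L2) := [pick x | mV mu x == Some y].
Definition sinvE (y : gE L1) : option (gE L2) := [pick x | mE mu x == Some y].

Lemma sinvV_eq x y : mV mu x = Some y -> sinvV y = Some x.
Proof.
move=> muxy; rewrite /sinvV; case: pickP => [x' /eqP mux'y|/(_ x)].
  by congr Some; apply: (proj1 (proj1 Hmu)) mux'y muxy.
by rewrite muxy eqxx.
Qed.

Lemma sinvE_eq x y : mE mu x = Some y -> sinvE y = Some x.
Proof.
move=> muxy; rewrite /sinvE; case: pickP => [x' /eqP mux'y|/(_ x)].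
  by congr Some; apply: (proj2 (proj1 Hmu)) mux'y muxy.
by rewrite muxy eqxx.
Qed.

Lemma sinvV_def y : exists x, sinvV y = Some x /\ mV mu x = Some y.
Proof.
by have [x muxy] := proj1 (proj2 Hmu) y; exists x; rewrite (sinvV_eq muxy).
Qed.

Lemma sinvE_def y : exists x, sinvE y = Some x /\ mE mu x = Some y.
Proof.
by have [x muxy] := proj2 (proj2 Hmu) y; exists x; rewrite (sinvE_eq muxy).
Qed.

Lemma sinv_axiom : morph_axiom sinvV sinvE.
Proof.
move=> y x sinvy; have [x' [sinvy' muxy]] := sinvE_def y.
rewrite sinvy in sinvy'; case: sinvy' muxy => <- muxy.
have [lab att] := mP muxy; split => //.
exact: map_eq_Some_inv sinvV_eq att.
Qed.

Definition sinv : morph L1 L2 := Morph sinv_axiom.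

End SubgraphInverse.

Section RestrictedPushout.

Variables (Lam : finType) (ar : Lam -> nat) (L2 L1 H2 R' G : graph ar).
Variables (muL : morph L2 L1) (m2 : morph L2 H2).
Variables (a1 : morph L1 R') (a2 : morph L2 R').
Variables (m : morph R' G) (d2 : morph H2 G).
Hypothesis HmuL : subgraph_morph muL.
Hypothesis Ha : meq (mcomp a1 muL) a2.
Hypothesis PO2 : is_pushout a2 m2 m d2.
Hypothesis Hm2 : injective_m m2.

Definition dropV (h : gV H2) : bool :=
  [exists x, (mV muL x == None) && (mV m2 x == Some h)].
Definition dropE (h : gE H2) : bool :=
  [exists x, (mE muL x == None) && (mE m2 x == Some h)].

Definition keepV : pred (gV H2) := fun h => ~~ dropV h.
Definition keepE : pred (gE H2) := fun h => ~~ dropE h.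

Definition pruned_graph : graph ar := restr_graph keepV keepE.
Definition pruned_match : morph L1 pruned_graph :=
  mcomp (restr_proj keepV keepE) (mcomp m2 (sinv HmuL)).
Definition pruned_comatch : morph pruned_graph G :=
  mcomp d2 (restr_incl keepV keepE).

Lemma dropV_d2 h : dropV h -> mV d2 h = None.
Proof.
case/existsP => x /andP [/eqP muLx /eqP m2x].
have /= := proj1 (proj1 PO2) x; rewrite m2x /= => <-.
by rewrite -(proj1 Ha x) /= muLx.
Qed.

Lemma restr_keepE_d2 h : ~~ restr_keepE keepV keepE h -> mE d2 h = None.
Proof.
rewrite negb_and negbK -has_predC => /orP [/existsP [x]|/hasP [v vh]].
  case/andP=> /eqP muLx /eqP m2x.
  have /= := proj2 (proj1 PO2) x; rewrite m2x /= => <-.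
  by rewrite -(proj2 Ha x) /= muLx.
rewrite /= negbK => /dropV_d2 d2v.
case d2h: (mE d2 h) => [h'|] //; have [_ att] := mP d2h.
by have := map_eq_Some_isSome att vh; rewrite d2v.
Qed.

Lemma keepV_m2 x y h : mV muL x = Some y -> mV m2 x = Some h -> keepV h.
Proof.
move=> muLx m2x; apply/existsP => -[x' /andP [/eqP muLx' /eqP m2x']].
by move: muLx'; rewrite ((proj1 Hm2) _ _ _ m2x' m2x) muLx.
Qed.

Lemma keepE_m2 x y h :
  mE muL x = Some y -> mE m2 x = Some h -> restr_keepE keepV keepE h.
Proof.
move=> muLx m2x; apply/andP; split.
  apply/existsP => -[x' /andP [/eqP muLx' /eqP m2x']].
  by move: muLx'; rewrite ((proj2 Hm2) _ _ _ m2x' m2x) muLx.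
apply/allP => w wh; have [_ att2] := mP m2x.
have [v vx m2v] := map_eq_Some_mem att2 wh; have [_ attL] := mP muLx.
case muLv: (mV muL v) (map_eq_Some_isSome attL vx) => [v'|] // _.
exact: keepV_m2 muLv m2v.
Qed.

Lemma pruned_pushout_comm :
  meq (mcomp m a1) (mcomp pruned_comatch pruned_match).
Proof.
split=> y /=.
  have [x [-> muLx]] := sinvV_def HmuL y.
  have /= := proj1 (proj1 PO2) x; rewrite -(proj1 Ha x) /= muLx /=.
  case m2x: (mV m2 x) => [h|] //= ->.
  by rewrite (insubT keepV (keepV_m2 muLx m2x)).
have [x [-> muLx]] := sinvE_def HmuL y.
have /= := proj2 (proj1 PO2) x; rewrite -(proj2 Ha x) /= muLx /=.
case m2x: (mE m2 x) => [h|] //= ->.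
by rewrite (insubT (restr_keepE keepV keepE) (keepE_m2 muLx m2x)).
Qed.

Section Universal.

Variables (X : graph ar) (b : morph R' X) (d : morph pruned_graph X).

Lemma pruned_cocone_lift :
  meq (mcomp b a1) (mcomp d pruned_match) ->
  meq (mcomp b a2) (mcomp (mcomp d (restr_proj keepV keepE)) m2).
Proof.
move=> [commV commE]; split=> x /=.
  rewrite -(proj1 Ha x) /=; case muLx: (mV muL x) => [y|] /=.
    by have /= -> := commV y; rewrite (sinvV_eq HmuL muLx) /=; case: (mV m2 x).
  case m2x: (mV m2 x) => [h|] //=; rewrite insubF //=.
  by apply/negbF/existsP; exists x; rewrite muLx m2x !eqxx.
rewrite -(proj2 Ha x) /=; case muLx: (mE muL x) => [y|] /=.
  by have /= -> := commE y; rewrite (sinvE_eq HmuL muLx) /=; case: (mE m2 x).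
case m2x: (mE m2 x) => [h|] //=; rewrite insubF //=.
apply/negbTE/nandP; left.
by apply/negPn/existsP; exists x; rewrite muLx m2x !eqxx.
Qed.

Lemma comatch_factor_of_d2 (w : morph G X) :
  meq (mcomp w d2) (mcomp d (restr_proj keepV keepE)) ->
  meq (mcomp w pruned_comatch) d.
Proof.
move=> [eqV eqE]; split=> h /=.
  by have /= -> := eqV (val h); rewrite valK.
by have /= -> := eqE (val h); rewrite valK.
Qed.

Lemma d2_factor_of_comatch (w : morph G X) :
  meq (mcomp w pruned_comatch) d ->
  meq (mcomp w d2) (mcomp d (restr_proj keepV keepE)).
Proof.
move=> [eqV eqE]; split=> h /=.
  case: insubP => [h1 _ <-|dh]; first by have /= <- := eqV h1.
  by move/negPn: dh => /dropV_d2 ->.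
case: insubP => [h1 _ <-|dh]; first by have /= <- := eqE h1.
by rewrite restr_keepE_d2.
Qed.

End Universal.

Lemma pruned_pushout : is_pushout a1 pruned_match m pruned_comatch.
Proof.
split; first exact: pruned_pushout_comm.
move=> X b d /pruned_cocone_lift comm.
have [w [wm [wd2 wuniq]]] := proj2 PO2 X b _ comm.
exists w; split=> //; split; first exact: comatch_factor_of_d2.
by move=> w' w'm /d2_factor_of_comatch w'd2; apply: wuniq.
Qed.

End RestrictedPushout.

Theorem mainTheorem3 (Lam : finType) (ar : Lam -> nat) (rho : rule ar)
  (Hrho : wf_rule rho)
  (L1 R1 L2 R2 R' G : graph ar)
  (pi1 : morph (rL rho) L1) (gam1 : morph L1 R1)
  (pi2 : morph (rL rho) L2) (gam2 : morph L2 R2)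
  (Hinst1 : instantiation pi1 gam1) (Hinst2 : instantiation pi2 gam2)
  (u : quant (rL rho)) (Hu : List.In u (rU rho))
  (Hoplus : oplus pi1 gam1 u pi2 gam2)
  (muL : morph L2 L1) (muR : morph R2 R1) (muR' : morph R1 R')
  (HmuL : subgraph_morph muL) (HmuR : subgraph_morph muR)
  (HmuR' : subgraph_morph muR')
  (Hcomm : meq (mcomp gam1 muL) (mcomp muR gam2))
  (m : morph R' G) (Hm : total_inj m) :
  forall (H2 : graph ar) (m2' : morph L2 H2) (d2 : morph H2 G),
    is_po_complement (mcomp muR' (mcomp muR gam2)) m m2' d2 ->
    total_inj m2' ->
    exists (H1 : graph ar) (m1' : morph L1 H1) (d1 : morph H1 G),
      is_po_complement (mcomp muR' gam1) m m1' d1 /\ subgraph H1 H2.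
Proof.
move=> H2 m2' d2 PO2 [_ Hm2].
have Ha : meq (mcomp (mcomp muR' gam1) muL) (mcomp muR' (mcomp muR gam2)).
  split=> v /=.
    by have /= <- := proj1 Hcomm v; case: (mV muL v).
  by have /= <- := proj2 Hcomm v; case: (mE muL v).
exists (pruned_graph muL m2'), (pruned_match m2' HmuL).
exists (pruned_comatch muL m2' d2); split.
  exact: pruned_pushout Ha PO2 Hm2.
exact: restr_subgraph.
Qed.
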